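(* Let $X$ be a proper metric space, $Y$ a metric space, and $F\colon X\to Y$ an $L$-Lipschitz quotient mapping. Let $\gamma\colon[0,T]\to Y$ be a $1$-Lipschitz curve with $\gamma(0)=F(x)$ for some $x\in X$. Then there is an $L$-Lipschitz curve $\tilde\gamma\colon[0,T]\to X$ with $\tilde\gamma(0)=x$ and $F\circ\tilde\gamma=\gamma$.
   Context: A metric space is proper if closed balls are compact. $F\colon X\to Y$ is an $L$-Lipschitz quotient ($L$-LQ) mapping, $L\ge1$, if $B(F(x),r/L)\subseteq F(B(x,r))\subseteq B(F(x),Lr)$ for all $x\in X$, $r>0$, where $B$ denotes open balls. *)

From Stdlib Require Import Reals Lra List.
Open Scope R_scope.

Record MetricSpace : Type := {
  mcarrier :> Type;
  mdist : mcarrier -> mcarrier -> R;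
  mdist_nonneg : forall x y, 0 <= mdist x y;
  mdist_eq0 : forall x y, mdist x y = 0 <-> x = y;
  mdist_sym : forall x y, mdist x y = mdist y x;
  mdist_tri : forall x y z, mdist x z <= mdist x y + mdist y z
}.

Arguments mdist {m} _ _.

Definition ball {X : MetricSpace} (x : X) (r : R) (y : X) : Prop := mdist x y < r.
Definition cball {X : MetricSpace} (x : X) (r : R) (y : X) : Prop := mdist x y <= r.

Definition is_open {X : MetricSpace} (U : X -> Prop) : Prop :=
  forall x, U x -> exists r, 0 < r /\ forall y, ball x r y -> U y.

Definition compact {X : MetricSpace} (K : X -> Prop) : Prop :=
  forall (I : Type) (U : I -> X -> Prop),
    (forall i, is_open (U i)) ->
    (forall x, K x -> exists i, U i x) ->
    exists l : list I, forall x, K x -> exists i, In i l /\ U i x.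

Definition proper (X : MetricSpace) : Prop :=
  forall (x : X) (r : R), compact (cball x r).

Definition image {X Y : Type} (F : X -> Y) (A : X -> Prop) (y : Y) : Prop :=
  exists x, A x /\ F x = y.

Definition subset {X : Type} (A B : X -> Prop) : Prop := forall x, A x -> B x.

Definition LQ_map {X Y : MetricSpace} (L : R) (F : X -> Y) : Prop :=
  1 <= L /\
  forall (x : X) (r : R), 0 < r ->
    subset (ball (F x) (r / L)) (image F (ball x r)) /\
    subset (image F (ball x r)) (ball (F x) (L * r)).

(* a curve [0,T] -> X (represented as a function on R, only values on [0,T] matter)
   which is K-Lipschitz on [0,T] *)
Definition lipschitz_on_interval {X : MetricSpace} (K T : R) (g : R -> X) : Prop :=
  forall s t, 0 <= s <= T -> 0 <= t <= T -> mdist (g s) (g t) <= K * Rabs (s - t).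

From Pilot Require Import Defs.
From Stdlib Require Import Reals Lra Lia List Cantor Classical IndefiniteDescription.
Open Scope R_scope.

(* At the dyadic scale h = T / 2^n the Lipschitz quotient property lifts gamma step by
   step: a point over gamma(i h) has a preimage of gamma((i+1) h) at distance less than
   L h (1 + 1/(n+1)).  These discrete lifts stay in a closed ball, which is compact, so a
   diagonal argument gives a subsequence converging at every dyadic time.  The limit lies
   over gamma and is L-Lipschitz on the dyadics, hence extends to an L-Lipschitz curve on
   [0, T], which lies over gamma everywhere by continuity. *)

Lemma inv_INR_succ_pos (M : nat) : 0 < / (INR M + 1).
Proof. apply Rinv_0_lt_compat. pose proof (pos_INR M). lra. Qed.

Lemma inv_INR_succ_le (M M' : nat) : (M <= M')%nat -> / (INR M' + 1) <= / (INR M + 1).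
Proof.
  intro HM. apply le_INR in HM. pose proof (pos_INR M).
  apply Rinv_le_contravar; lra.
Qed.

Lemma inv_INR_succ_lt (e : R) : 0 < e -> exists M : nat, / (INR M + 1) < e.
Proof.
  intro He. destruct (archimed_cor1 e He) as [M [HM HM0]]. exists M.
  apply lt_0_INR in HM0. eapply Rle_lt_trans; [|exact HM].
  apply Rinv_le_contravar; lra.
Qed.

Lemma Rle_plus_mult_epsilon (a b C : R) : 0 <= C ->
  (forall e, 0 < e -> a <= b + C * e) -> a <= b.
Proof.
  intros HC H. apply Rle_plus_epsilon. intros e He.
  assert (HCe : C * (e / (C + 1)) <= e).
  { replace (C * (e / (C + 1))) with (e - e / (C + 1)) by (field; lra).
    assert (0 < e / (C + 1)) by (apply Rdiv_lt_0_compat; lra). lra. }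
  specialize (H (e / (C + 1)) ltac:(apply Rdiv_lt_0_compat; lra)). lra.
Qed.

Lemma Rabs_sub_le_approx (a b s t e : R) :
  Rabs (a - s) < e -> Rabs (b - t) < e -> Rabs (a - b) <= Rabs (s - t) + 2 * e.
Proof. unfold Rabs. repeat destruct Rcase_abs; lra. Qed.

Lemma Rabs_Rmin_sub_le (a b T : R) : Rabs (Rmin a T - Rmin b T) <= Rabs (a - b).
Proof. unfold Rmin, Rabs. repeat destruct Rle_dec; repeat destruct Rcase_abs; lra. Qed.

Lemma dependent_choice_seq (A : Type) (P : nat -> A -> Prop)
  (Rel : nat -> A -> A -> Prop) (a0 : A) :
  P 0%nat a0 ->
  (forall i a, P i a -> exists b, P (S i) b /\ Rel i a b) ->
  exists s : nat -> A, s 0%nat = a0 /\ forall i, P i (s i) /\ Rel i (s i) (s (S i)).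
Proof.
  intros H0 Hstep.
  assert (next : forall i (a : {a | P i a}),
             {b : {b | P (S i) b} | Rel i (proj1_sig a) (proj1_sig b)}).
  { intros i [a Ha].
    destruct (constructive_indefinite_description _ (Hstep i a Ha)) as [b [Hb HR]].
    exact (exist _ (exist _ b Hb) HR). }
  set (s := nat_rect (fun i => {a | P i a}) (exist _ a0 H0) (fun i a => proj1_sig (next i a))).
  exists (fun i => proj1_sig (s i)). split; [reflexivity|]. intro i.
  split; [exact (proj2_sig (s i))|exact (proj2_sig (next i (s i)))].
Qed.

Section Metric.
Variable X : MetricSpace.

Lemma mdist_refl (a : X) : mdist a a = 0.
Proof. apply mdist_eq0. reflexivity. Qed.

Lemma eq_of_mdist_le_eps (a b : X) (C : R) : 0 <= C ->
  (forall e, 0 < e -> mdist a b <= C * e) -> a = b.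
Proof.
  intros HC H. apply mdist_eq0. apply Rle_antisym; [|apply mdist_nonneg].
  apply (Rle_plus_mult_epsilon _ _ C HC). intros e He. rewrite Rplus_0_l. auto.
Qed.

Lemma ball_open (p : X) (r : R) : is_open (ball p r).
Proof.
  intros y Hy. unfold ball in *. exists (r - mdist p y). split; [lra|].
  intros z Hz. pose proof (mdist_tri X p y z). lra.
Qed.

(* Cantor's intersection theorem, phrased with adherent points. *)
Lemma compact_nested_cluster (K : X -> Prop) (P : nat -> X -> Prop) :
  Defs.compact K ->
  (forall M M' y, (M <= M')%nat -> P M' y -> P M y) ->
  (forall M, exists y, P M y /\ K y) ->
  exists p, forall M e, 0 < e -> exists y, P M y /\ mdist y p < e.
Proof.
  intros HK Hmono Hne. apply NNPP. intro Hno.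
  assert (Hfar : forall p : X, exists eM : R * nat,
             0 < fst eM /\ forall y, P (snd eM) y -> fst eM <= mdist y p).
  { intro p. apply NNPP. intro Hp. apply Hno. exists p. intros M e He.
    apply NNPP. intro Hy. apply Hp. exists (e, M). split; [exact He|].
    intros y HPy. apply Rnot_lt_le. intro Hlt. apply Hy. exists y. auto. }
  destruct (functional_choice _ Hfar) as [r Hr].
  destruct (HK X (fun p => ball p (fst (r p)))) as [l Hl].
  - intro p. apply ball_open.
  - intros y _. exists y. unfold ball. rewrite mdist_refl. apply Hr.
  - set (Mmax := list_max (map (fun p => snd (r p)) l)).
    destruct (Hne Mmax) as [y [HPy HKy]].
    destruct (Hl y HKy) as [p [Hpl Hpy]].
    assert (HM : (snd (r p) <= Mmax)%nat).
    { pose proof (proj1 (list_max_le _ Mmax) (Nat.le_refl _)) as Hall.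
      rewrite Forall_forall in Hall. apply Hall, (in_map (fun p => snd (r p))), Hpl. }
    pose proof (proj2 (Hr p) y (Hmono _ _ _ HM HPy)).
    unfold ball in Hpy. rewrite mdist_sym in Hpy. lra.
Qed.

Lemma mdist_le_steps (a : nat -> X) (c : R) :
  (forall i, mdist (a i) (a (S i)) <= c) ->
  forall i j, mdist (a i) (a j) <= c * Rabs (INR i - INR j).
Proof.
  intros Hstep.
  assert (Hup : forall i k, mdist (a i) (a (k + i)%nat) <= c * INR k).
  { intros i k. induction k as [|k IH].
    - rewrite mdist_refl. simpl. lra.
    - rewrite S_INR. pose proof (mdist_tri X (a i) (a (k + i)%nat) (a (S k + i)%nat)).
      specialize (Hstep (k + i)%nat). simpl in *. lra. }
  assert (Hle : forall i j, (i <= j)%nat -> mdist (a i) (a j) <= c * Rabs (INR i - INR j)).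
  { intros i j Hij. destruct (Nat.le_exists_sub i j Hij) as [k [-> _]].
    rewrite plus_INR. replace (INR i - (INR k + INR i)) with (- INR k) by ring.
    rewrite Rabs_Ropp, Rabs_pos_eq by apply pos_INR. apply Hup. }
  intros i j. destruct (Nat.le_ge_cases i j); [auto|].
  rewrite mdist_sym, Rabs_minus_sym. auto.
Qed.

End Metric.

Lemma LQ_map_lipschitz (X Y : MetricSpace) (L : R) (F : X -> Y) :
  LQ_map L F -> forall a b : X, mdist (F a) (F b) <= L * mdist a b.
Proof.
  intros [HL HQ] a b. apply Rnot_lt_le. intro Hlt.
  pose proof (mdist_nonneg X a b) as Hd.
  set (r := (mdist (F a) (F b) / L + mdist a b) / 2).
  assert (Hr : mdist a b < r).
  { assert (mdist a b < mdist (F a) (F b) / L).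
    { apply (Rmult_lt_reg_l L); [lra|]. field_simplify; lra. }
    unfold r. lra. }
  assert (HLr : L * r = (mdist (F a) (F b) + L * mdist a b) / 2) by (unfold r; field; lra).
  destruct (HQ a r ltac:(lra)) as [_ Himg].
  specialize (Himg (F b) (ex_intro _ b (conj Hr eq_refl))). unfold ball in Himg. lra.
Qed.

Lemma LQ_map_lift (X Y : MetricSpace) (L : R) (F : X -> Y) (a : X) (y : Y) (r : R) :
  LQ_map L F -> 0 < r -> mdist (F a) y < r / L -> exists b, F b = y /\ mdist a b < r.
Proof.
  intros [_ HQ] Hr Hy. destruct (proj1 (HQ a r Hr) y Hy) as [b [Hb HFb]]. eauto.
Qed.

Lemma lipschitz_on_interval_comp (X Y : MetricSpace) (L K T : R) (F : X -> Y) (g : R -> X) :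
  0 <= L -> (forall a b, mdist (F a) (F b) <= L * mdist a b) ->
  lipschitz_on_interval K T g -> lipschitz_on_interval (L * K) T (fun t => F (g t)).
Proof.
  intros HL HF Hg s t Hs Ht. eapply Rle_trans; [apply HF|].
  rewrite Rmult_assoc. apply Rmult_le_compat_l; auto.
Qed.

Definition dense_in (T : R) (q : nat -> R) : Prop :=
  (forall j, 0 <= q j <= T) /\
  forall t, 0 <= t <= T -> forall e, 0 < e -> exists j, Rabs (q j - t) < e.

Lemma lipschitz_curves_eq_on_dense (Y : MetricSpace) (K1 K2 T : R) (u v : R -> Y)
  (q : nat -> R) :
  0 <= K1 -> 0 <= K2 -> dense_in T q ->
  lipschitz_on_interval K1 T u -> lipschitz_on_interval K2 T v ->
  (forall j, u (q j) = v (q j)) -> forall t, 0 <= t <= T -> u t = v t.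
Proof.
  intros HK1 HK2 [Hq Hdense] Hu Hv Huv t Ht.
  apply (eq_of_mdist_le_eps _ _ _ (K1 + K2)); [lra|]. intros e He.
  destruct (Hdense t Ht e He) as [j Hj]. rewrite Rabs_minus_sym in Hj.
  pose proof (Hu t (q j) Ht (Hq j)) as Hut. pose proof (Hv (q j) t (Hq j) Ht) as Hvt.
  rewrite Rabs_minus_sym in Hvt.
  pose proof (mdist_tri Y (u t) (u (q j)) (v t)). rewrite Huv in *.
  assert (K1 * Rabs (t - q j) <= K1 * e) by (apply Rmult_le_compat_l; lra).
  assert (K2 * Rabs (t - q j) <= K2 * e) by (apply Rmult_le_compat_l; lra).
  lra.
Qed.

Lemma lipschitz_extension_of_dense (X : MetricSpace) (K : X -> Prop) (L T : R)
  (q : nat -> R) (g : nat -> X) :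
  Defs.compact K -> 0 <= L -> dense_in T q -> (forall j, K (g j)) ->
  (forall j k, mdist (g j) (g k) <= L * Rabs (q j - q k)) ->
  exists G : R -> X, lipschitz_on_interval L T G /\ forall j, G (q j) = g j.
Proof.
  intros HK HL [Hq Hdense] HKg Hg.
  assert (Hlim : forall t, exists p, 0 <= t <= T ->
    forall e, 0 < e -> exists j, Rabs (q j - t) < e /\ mdist (g j) p < e).
  { intro t. destruct (classic (0 <= t <= T)) as [Ht|Ht]; [|exists (g 0%nat); tauto].
    destruct (compact_nested_cluster X K
      (fun M y => exists j, Rabs (q j - t) < / (INR M + 1) /\ y = g j) HK) as [p Hp].
    - intros M M' y HM [j [Hj ->]]. exists j. split; [|reflexivity].
      eapply Rlt_le_trans; [exact Hj|]. apply inv_INR_succ_le, HM.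
    - intro M. destruct (Hdense t Ht _ (inv_INR_succ_pos M)) as [j Hj].
      exists (g j). split; [exists j; auto|apply HKg].
    - exists p. intros _ e He. destruct (inv_INR_succ_lt e He) as [M HM].
      destruct (Hp M e He) as [y [[j [Hj ->]] Hy]]. exists j. split; [lra|exact Hy]. }
  destruct (functional_choice _ Hlim) as [G HG].
  exists G. split.
  - intros s t Hs Ht. apply (Rle_plus_mult_epsilon _ _ (2 + 2 * L)); [lra|]. intros e He.
    destruct (HG s Hs e He) as [j [Hj Hjs]]. destruct (HG t Ht e He) as [k [Hk Hkt]].
    pose proof (Rabs_sub_le_approx _ _ _ _ _ Hj Hk) as Hjk.
    assert (L * Rabs (q j - q k) <= L * (Rabs (s - t) + 2 * e))
      by (apply Rmult_le_compat_l; lra).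
    pose proof (Hg j k). rewrite mdist_sym in Hjs.
    pose proof (mdist_tri X (G s) (g j) (G t)). pose proof (mdist_tri X (g j) (g k) (G t)).
    lra.
  - intro j. apply (eq_of_mdist_le_eps _ _ _ (1 + L)); [lra|]. intros e He.
    destruct (HG (q j) (Hq j) e He) as [k [Hk Hkj]].
    assert (L * Rabs (q k - q j) <= L * e) by (apply Rmult_le_compat_l; lra).
    pose proof (Hg k j). rewrite mdist_sym in Hkj.
    pose proof (mdist_tri X (G (q j)) (g k) (g j)). lra.
Qed.

Section Diagonal.
Variables (X : MetricSpace) (K : X -> Prop) (f : nat -> nat -> X) (N : nat -> nat).
Hypotheses (HK : Defs.compact K) (HfK : forall n j, (N j <= n)%nat -> K (f n j)).

(* [g] is a cluster point of the sequence [f n] for the product topology on the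
   coordinates [j < k]. *)
Definition cluster_below (k : nat) (g : nat -> X) : Prop :=
  forall e n0, 0 < e -> exists n, (n0 <= n)%nat /\
    forall j, (j < k)%nat -> mdist (f n j) (g j) < e.

Lemma cluster_below_extend (k : nat) (g : nat -> X) : cluster_below k g ->
  exists p, cluster_below (S k) (fun j => if Nat.eqb j k then p else g j).
Proof.
  intro Hg.
  destruct (compact_nested_cluster X K (fun M y => exists n,
    (M <= n)%nat /\ (N k <= n)%nat /\ y = f n k /\
    forall j, (j < k)%nat -> mdist (f n j) (g j) < / (INR M + 1)) HK) as [p Hp].
  - intros M M' y HM [n [Hn [HNn [-> Hclose]]]]. exists n. do 3 (split; [auto; lia|]).
    intros j Hj. eapply Rlt_le_trans; [apply Hclose, Hj|]. apply inv_INR_succ_le, HM.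
  - intro M.
    destruct (Hg _ (Nat.max M (N k)) (inv_INR_succ_pos M)) as [n [Hn Hclose]].
    exists (f n k). split; [exists n; repeat split; auto; lia|apply HfK; lia].
  - exists p. intros e n0 He. destruct (inv_INR_succ_lt e He) as [M0 HM0].
    destruct (Hp (Nat.max n0 M0) e He) as [y [[n [Hn [_ [-> Hclose]]]] Hy]].
    exists n. split; [lia|]. intros j Hj.
    destruct (Nat.eqb_spec j k) as [->|Hjk]; [exact Hy|].
    pose proof (inv_INR_succ_le M0 (Nat.max n0 M0) ltac:(lia)).
    specialize (Hclose j ltac:(lia)). lra.
Qed.

Lemma diagonal_cluster : exists g : nat -> X, forall k, cluster_below k g.
Proof.
  destruct (dependent_choice_seq (nat -> X) cluster_below
    (fun k g g' => forall j, (j < k)%nat -> g' j = g j) (f 0%nat)) as [s [_ Hs]].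
  - intros e n0 _. exists n0. split; [lia|]. intros; lia.
  - intros k g Hg. destruct (cluster_below_extend k g Hg) as [p Hp].
    eexists. split; [exact Hp|]. intros j Hj. cbv beta. destruct (Nat.eqb_spec j k); [lia|reflexivity].
  - assert (Hstable : forall k j, (j < k)%nat -> s k j = s (S j) j).
    { induction k as [|k IH]; intros j Hj; [lia|].
      destruct (Nat.eq_dec j k) as [->|Hjk]; [reflexivity|].
      rewrite (proj2 (Hs k) j) by lia. apply IH. lia. }
    exists (fun j => s (S j) j). intros k e n0 He.
    destruct (proj1 (Hs k) e n0 He) as [n [Hn Hclose]].
    exists n. split; [exact Hn|]. intros j Hj. rewrite <- (Hstable k j Hj). auto.
Qed.

End Diagonal.

(* Cantor pairing enumerates the pairs (m, i); code j stands for the dyadic time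
   (i / 2^m) T, with i clamped to 2^m so that every code lies in [0, T]. *)
Definition dyad_level (j : nat) : nat := fst (Cantor.of_nat j).
Definition dyad_num (j : nat) : nat := Nat.min (snd (Cantor.of_nat j)) (2 ^ dyad_level j).
Definition mesh (T : R) (n : nat) : R := T / 2 ^ n.
Definition dyad (T : R) (j : nat) : R := INR (dyad_num j) * mesh T (dyad_level j).
(* Position of [dyad T j] on the grid of mesh [mesh T n], meaningful for [dyad_level j <= n]. *)
Definition dyad_index (n j : nat) : nat := (dyad_num j * 2 ^ (n - dyad_level j))%nat.
Definition dyad_origin : nat := Cantor.to_nat (0, 0)%nat.

Lemma INR_pow2 (n : nat) : INR (2 ^ n) = 2 ^ n.
Proof. rewrite pow_INR. reflexivity. Qed.

Lemma INR_lt_pow2 (n : nat) : INR n < 2 ^ n.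
Proof.
  induction n as [|n IH]; [simpl; lra|].
  rewrite S_INR. simpl. assert (1 <= 2 ^ n) by (apply pow_R1_Rle; lra). lra.
Qed.

Lemma mesh_pos (T : R) (n : nat) : 0 < T -> 0 < mesh T n.
Proof. intro HT. apply Rdiv_lt_0_compat; [exact HT|apply pow_lt; lra]. Qed.

Lemma mesh_mul_pow2 (T : R) (n : nat) : mesh T n * 2 ^ n = T.
Proof. unfold mesh. field. apply pow_nonzero. lra. Qed.

Lemma dyad_index_mesh (T : R) (n j : nat) : (dyad_level j <= n)%nat ->
  INR (dyad_index n j) * mesh T n = dyad T j.
Proof.
  intro Hj. unfold dyad_index, dyad, mesh. rewrite mult_INR, INR_pow2.
  replace n with (n - dyad_level j + dyad_level j)%nat at 2 by lia.
  rewrite pow_add. field. split; apply pow_nonzero; lra.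
Qed.

Lemma dyad_range (T : R) (j : nat) : 0 <= T -> 0 <= dyad T j <= T.
Proof.
  intro HT. unfold dyad.
  assert (Hm : 0 <= mesh T (dyad_level j)).
  { unfold mesh. apply Rmult_le_pos; [exact HT|].
    apply Rlt_le, Rinv_0_lt_compat, pow_lt. lra. }
  pose proof (pos_INR (dyad_num j)).
  assert (Hnum : INR (dyad_num j) <= 2 ^ dyad_level j).
  { rewrite <- INR_pow2. apply le_INR. unfold dyad_num. lia. }
  pose proof (mesh_mul_pow2 T (dyad_level j)). split; nra.
Qed.

Lemma dyad_origin_level : dyad_level dyad_origin = 0%nat.
Proof. unfold dyad_level, dyad_origin. rewrite Cantor.cancel_of_to. reflexivity. Qed.

Lemma dyad_origin_index (n : nat) : dyad_index n dyad_origin = 0%nat.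
Proof. unfold dyad_index, dyad_num, dyad_origin. rewrite Cantor.cancel_of_to. reflexivity. Qed.

Lemma dyad_origin_eq (T : R) : dyad T dyad_origin = 0.
Proof.
  rewrite <- (dyad_index_mesh T 0 dyad_origin) by (rewrite dyad_origin_level; lia).
  rewrite dyad_origin_index. simpl. ring.
Qed.

Lemma nat_floor (t h : R) : 0 <= t -> 0 < h -> exists i : nat, INR i * h <= t < INR i * h + h.
Proof.
  intros Ht Hh. destruct (INR_archimed h t Hh) as [N HN].
  induction N as [|N IH]; [simpl in HN; lra|].
  destruct (Rlt_le_dec t (INR N * h)) as [Hlt|Hge]; [exact (IH Hlt)|].
  exists N. rewrite S_INR in HN. lra.
Qed.

Lemma dyad_dense (T : R) : 0 < T -> dense_in T (dyad T).
Proof.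
  intro HT. split; [intro j; apply dyad_range; lra|]. intros t Ht e He.
  destruct (archimed_cor1 (e / T) ltac:(apply Rdiv_lt_0_compat; lra)) as [m [Hm Hm0]].
  apply lt_0_INR in Hm0.
  assert (Hmesh : mesh T m < e).
  { unfold mesh. apply (Rmult_lt_reg_r (/ T)); [apply Rinv_0_lt_compat; lra|].
    replace (T / 2 ^ m * / T) with (/ 2 ^ m) by (field; split; [lra|apply pow_nonzero; lra]).
    eapply Rlt_trans; [|exact Hm]. apply Rinv_lt_contravar; [|apply INR_lt_pow2].
    apply Rmult_lt_0_compat; [exact Hm0|apply pow_lt; lra]. }
  pose proof (mesh_pos T m HT) as Hh.
  destruct (nat_floor t (mesh T m) (proj1 Ht) Hh) as [i Hi].
  assert (Hi2 : (i <= 2 ^ m)%nat).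
  { apply INR_le. rewrite INR_pow2. pose proof (mesh_mul_pow2 T m).
    apply (Rmult_le_reg_r (mesh T m)); nra. }
  exists (Cantor.to_nat (m, i)).
  unfold dyad, dyad_num, dyad_level. rewrite Cantor.cancel_of_to. simpl.
  rewrite Nat.min_l by exact Hi2.
  rewrite Rabs_minus_sym, Rabs_pos_eq; lra.
Qed.

Section Lift.
Variables (X Y : MetricSpace) (L : R) (F : X -> Y) (T : R) (gamma : R -> Y) (x0 : X).
Hypotheses (HX : proper X) (HF : LQ_map L F) (HT : 0 < T)
  (Hgamma : lipschitz_on_interval 1 T gamma) (Hx0 : gamma 0 = F x0).

(* Clamping the times at [T] lets the lift be continued forever. *)
Lemma discrete_lift (h h' : R) : 0 <= h < h' ->
  exists a : nat -> X, a 0%nat = x0 /\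
    forall i, F (a i) = gamma (Rmin (INR i * h) T) /\ mdist (a i) (a (S i)) < L * h'.
Proof.
  intro Hh. pose proof (proj1 HF) as HL.
  destruct (dependent_choice_seq X (fun i a => F a = gamma (Rmin (INR i * h) T))
    (fun _ a b => mdist a b < L * h') x0) as [a [Ha0 Ha]].
  - simpl. rewrite Rmult_0_l, Rmin_left by lra. symmetry. exact Hx0.
  - intros i a Ha. apply (LQ_map_lift X Y L F); [exact HF|nra|].
    replace (L * h' / L) with h' by (field; lra). rewrite Ha.
    assert (Hclamp : forall k : nat, 0 <= Rmin (INR k * h) T <= T).
    { intro k. pose proof (pos_INR k). split; [apply Rmin_glb; nra|apply Rmin_r]. }
    eapply Rle_lt_trans; [apply (Hgamma _ _ (Hclamp i) (Hclamp (S i)))|].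
    rewrite Rmult_1_l. eapply Rle_lt_trans; [apply Rabs_Rmin_sub_le|].
    rewrite S_INR. replace (INR i * h - (INR i + 1) * h) with (- h) by ring.
    rewrite Rabs_Ropp, Rabs_pos_eq; lra.
  - exists a. auto.
Qed.

Lemma lift_paths : exists path : nat -> nat -> X, forall n,
  path n 0%nat = x0 /\ forall i, F (path n i) = gamma (Rmin (INR i * mesh T n) T) /\
    mdist (path n i) (path n (S i)) < L * (mesh T n * (1 + / (INR n + 1))).
Proof.
  apply (functional_choice (fun n (a : nat -> X) => a 0%nat = x0 /\ forall i,
    F (a i) = gamma (Rmin (INR i * mesh T n) T) /\
    mdist (a i) (a (S i)) < L * (mesh T n * (1 + / (INR n + 1))))).
  intro n. apply discrete_lift.
  pose proof (mesh_pos T n HT). pose proof (inv_INR_succ_pos n). split; nra.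
Qed.

Section PathLimit.
Variables (path : nat -> nat -> X) (g : nat -> X).
Hypothesis Hpath : forall n, path n 0%nat = x0 /\ forall i,
  F (path n i) = gamma (Rmin (INR i * mesh T n) T) /\
  mdist (path n i) (path n (S i)) < L * (mesh T n * (1 + / (INR n + 1))).

Let sample (n j : nat) : X := path n (dyad_index n j).

Hypothesis Hg : forall k, cluster_below X sample k g.

Lemma sample_F (n j : nat) : (dyad_level j <= n)%nat -> F (sample n j) = gamma (dyad T j).
Proof.
  intro Hj. unfold sample. rewrite (proj1 (proj2 (Hpath n) _)), dyad_index_mesh by exact Hj.
  rewrite Rmin_left; [reflexivity|]. apply dyad_range. lra.
Qed.

Lemma sample_lipschitz (n j k : nat) :
  (dyad_level j <= n)%nat -> (dyad_level k <= n)%nat ->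
  mdist (sample n j) (sample n k) <= L * (1 + / (INR n + 1)) * Rabs (dyad T j - dyad T k).
Proof.
  intros Hj Hk. unfold sample.
  eapply Rle_trans.
  { apply (mdist_le_steps X (path n)). intro i. apply Rlt_le, (proj2 (Hpath n)). }
  rewrite <- (dyad_index_mesh T n j), <- (dyad_index_mesh T n k) by assumption.
  rewrite <- Rmult_minus_distr_r, Rabs_mult, (Rabs_pos_eq (mesh T n))
    by (apply Rlt_le, mesh_pos, HT).
  right. ring.
Qed.

Lemma sample_bound (n j : nat) : (dyad_level j <= n)%nat ->
  cball x0 (2 * L * T) (sample n j).
Proof.
  intro Hj. pose proof (proj1 HF) as HL.
  assert (Hx : sample n dyad_origin = x0).
  { unfold sample. rewrite dyad_origin_index. apply Hpath. }
  unfold cball. rewrite <- Hx.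
  eapply Rle_trans; [apply sample_lipschitz; [rewrite dyad_origin_level; lia|exact Hj]|].
  rewrite dyad_origin_eq, Rminus_0_l, Rabs_Ropp, Rabs_pos_eq by (apply dyad_range; lra).
  pose proof (dyad_range T j ltac:(lra)). pose proof (inv_INR_succ_pos n).
  pose proof (inv_INR_succ_le 0 n ltac:(lia)). simpl in *. rewrite Rplus_0_l, Rinv_1 in *.
  apply Rle_trans with (L * 2 * T); [apply Rmult_le_compat; nra|lra].
Qed.

Lemma limit_F (j : nat) : F (g j) = gamma (dyad T j).
Proof.
  pose proof (proj1 HF) as HL.
  apply (eq_of_mdist_le_eps _ _ _ L); [lra|]. intros e He.
  destruct (Hg (S j) e (dyad_level j) He) as [n [Hn Hclose]].
  rewrite <- (sample_F n j Hn), mdist_sym.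
  eapply Rle_trans; [apply (LQ_map_lipschitz X Y L F HF)|].
  apply Rmult_le_compat_l; [lra|]. apply Rlt_le, Hclose. lia.
Qed.

Lemma limit_lipschitz (j k : nat) : mdist (g j) (g k) <= L * Rabs (dyad T j - dyad T k).
Proof.
  pose proof (proj1 HF) as HL.
  apply (Rle_plus_mult_epsilon _ _ (2 + L * T)); [nra|]. intros e He.
  destruct (inv_INR_succ_lt e He) as [M HM].
  destruct (Hg (S (Nat.max j k)) e (Nat.max M (Nat.max (dyad_level j) (dyad_level k))) He)
    as [n [Hn Hclose]].
  pose proof (Hclose j ltac:(lia)) as Hj. pose proof (Hclose k ltac:(lia)) as Hk.
  pose proof (sample_lipschitz n j k ltac:(lia) ltac:(lia)) as Hjk.
  rewrite mdist_sym in Hj.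
  pose proof (mdist_tri X (g j) (sample n j) (g k)).
  pose proof (mdist_tri X (sample n j) (sample n k) (g k)).
  set (D := Rabs (dyad T j - dyad T k)) in *.
  assert (HD : 0 <= D <= T).
  { pose proof (dyad_range T j ltac:(lra)). pose proof (dyad_range T k ltac:(lra)).
    split; [apply Rabs_pos|]. unfold D, Rabs. destruct Rcase_abs; lra. }
  assert (Hn' : / (INR n + 1) <= e).
  { pose proof (inv_INR_succ_le M n ltac:(lia)). lra. }
  assert (L * / (INR n + 1) * D <= L * e * T).
  { apply Rmult_le_compat; [|apply Rabs_pos| |lra].
    - pose proof (inv_INR_succ_pos n). nra.
    - apply Rmult_le_compat_l; lra. }
  lra.
Qed.

Lemma limit_origin : g dyad_origin = x0.
Proof.
  apply (eq_of_mdist_le_eps _ _ _ 1); [lra|]. intros e He.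
  destruct (Hg (S dyad_origin) e 0%nat He) as [n [_ Hclose]].
  specialize (Hclose dyad_origin ltac:(lia)).
  unfold sample in Hclose. rewrite dyad_origin_index, (proj1 (Hpath n)), mdist_sym in Hclose.
  lra.
Qed.

End PathLimit.

Lemma dyadic_lift : exists g : nat -> X,
  (forall j, F (g j) = gamma (dyad T j)) /\
  (forall j k, mdist (g j) (g k) <= L * Rabs (dyad T j - dyad T k)) /\
  g dyad_origin = x0.
Proof.
  destruct lift_paths as [path Hpath].
  destruct (diagonal_cluster X (cball x0 (2 * L * T)) (fun n j => path n (dyad_index n j))
    dyad_level (HX x0 _)) as [g Hg].
  { intros n j Hj. exact (sample_bound path Hpath n j Hj). }
  exists g. split; [|split].
  - exact (limit_F path g Hpath Hg).
  - exact (limit_lipschitz path g Hpath Hg).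
  - exact (limit_origin path g Hpath Hg).
Qed.

End Lift.

Theorem lemma3p3 (X Y : MetricSpace) (L : R) (F : X -> Y) (T : R)
  (gamma : R -> Y) (x : X) :
  proper X ->
  LQ_map L F ->
  0 <= T ->
  lipschitz_on_interval 1 T gamma ->
  gamma 0 = F x ->
  exists gt : R -> X,
    lipschitz_on_interval L T gt /\ gt 0 = x /\
    (forall t, 0 <= t <= T -> F (gt t) = gamma t).
Proof.
  intros HX HF HT0 Hgamma Hx. pose proof (proj1 HF) as HL.
  destruct (Req_dec T 0) as [-> | HTne].
  { exists (fun _ => x). split; [|split; [reflexivity|]].
    - intros s t _ _. rewrite mdist_refl. pose proof (Rabs_pos (s - t)). nra.
    - intros t Ht. replace t with 0 by lra. symmetry. exact Hx. }
  assert (HT : 0 < T) by lra.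
  destruct (dyadic_lift X Y L F T gamma x HX HF HT Hgamma Hx) as [g [HgF [Hglip Hg0]]].
  assert (HgK : forall j, cball x (L * T) (g j)).
  { intro j. unfold cball. rewrite <- Hg0. eapply Rle_trans; [apply Hglip|].
    rewrite dyad_origin_eq, Rminus_0_l, Rabs_Ropp, Rabs_pos_eq by (apply dyad_range; lra).
    apply Rmult_le_compat_l, dyad_range; lra. }
  destruct (lipschitz_extension_of_dense X _ L T (dyad T) g (HX x (L * T)) ltac:(lra)
    (dyad_dense T HT) HgK Hglip) as [G [HGlip HGdyad]].
  exists G. split; [exact HGlip|split].
  - rewrite <- (dyad_origin_eq T), HGdyad. exact Hg0.
  - apply (lipschitz_curves_eq_on_dense Y (L * L) 1 T _ gamma (dyad T)); [nra|lra| | |exact Hgamma|].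
    + apply dyad_dense, HT.
    + apply lipschitz_on_interval_comp; [lra|apply LQ_map_lipschitz, HF|exact HGlip].
    + intro j. rewrite HGdyad. apply HgF.
Qed.
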